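(* Let $\mathcal{D}$ be a hybrid basic action theory containing the action $\mathit{noOp}$, let $\varphi$ be an effect and $\sigma$ a situation. Then: (1) $\mathcal{D}\models\exists a,ts.\,\mathit{PrimCause}(a,ts,\varphi,\sigma)\supset\exists\sigma'.\,\mathit{DefusedSit}(\varphi,\sigma,\sigma')$; (2) $\mathcal{D}\models\forall a_1,ts_1,\sigma_1,a_2,ts_2,\sigma_2.\;\mathit{PreempContr}(a_1,ts_1,\sigma_1,\varphi,\sigma)\land\mathit{PreempContr}(a_2,ts_2,\sigma_2,\varphi,\sigma)\land|\sigma_1|=|\sigma_2|\supset\sigma_1=\sigma_2$; (3) $\mathcal{D}\models\forall\sigma',\sigma''.\;\mathit{DefusedSit}(\varphi,\sigma,\sigma')\land\mathit{DefusedSit}(\varphi,\sigma,\sigma'')\supset\sigma'=\sigma''$; (4) $\mathcal{D}\models\forall\sigma'.\;\mathit{DefusedSit}(\varphi,\sigma,\sigma')\supset\neg\exists b,ts_b.\,\mathit{PrimCause}(b,ts_b,\varphi,\sigma')$.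
   Context: Hybrid temporal situation calculus (HTSC): $S_0$ initial situation, $do(a,s)$ successor situation. $s\sqsubset s'$: $s'$ reachable from $s$ by one or more actions; $s\sqsubseteq s'$: $s\sqsubset s'\lor s=s'$. $\mathit{time}(a(\vec x,t))=t$, $\mathit{start}(do(a,s))=\mathit{time}(a)$. $\mathit{Exec}(s)\doteq\forall a,s'.(do(a,s')\sqsubseteq s\supset\mathit{Poss}(a,s')\land\mathit{start}(s')\le\mathit{time}(a))$; $s<s'$ abbreviates $s\sqsubset s'\land\mathit{Exec}(s')$; $s\le s'$ abbreviates $s<s'\lor s=s'$. $\mathit{timeStamp}(S_0)=0$, $\mathit{timeStamp}(do(a,s))=\mathit{timeStamp}(s)+1$. A hybrid basic action theory $\mathcal{D}$ contains initial-state, precondition, successor-state (discrete fluents), state evolution (temporal fluents), unique-names and foundational axioms. A temporal fluent $f$ has state evolution axiom $f(\vec x,t,s)=y\equiv[\bigvee_i(\gamma^f_i(\vec x,s)\land\delta_i(\vec x,y,t,s))\lor(y=f(\vec x,\mathit{start}(s),s)\land\neg\bigvee_i\gamma^f_i(\vec x,s))]$ with mutually exclusive contexts $\gamma^f_i$. An effect $\varphi$ is a situation- and time-suppressed formula, uniform in the situation, constraining the value of one primitive temporal fluent $f$; $\varphi[t,s]$ restores time $t$ and situation $s$; $\psi[s]$ restores $s$ in situation-suppressed $\psi$. $\mathit{noOp}(t)$ is an action (with $\mathit{time}(\mathit{noOp}(t))=t$) that is always possible and affects no fluent. $\mathit{CausesDir}(a,ts,\psi,s)\doteq\exists s_a.\,\mathit{timeStamp}(s_a)=ts\land(S_0<do(a,s_a)\le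 s)\land\neg\psi[s_a]\land\forall s'.(do(a,s_a)\le s'\le s\supset\psi[s'])$. $\mathit{end}(s',s)=\mathit{start}(s')$ if $s'=s$; $=\mathit{time}(a)$ if $do(a,s')\le s$. $\mathit{AchvSitAux}(s_\varphi,\varphi,s)\doteq\varphi[\mathit{end}(s_\varphi,s),s_\varphi]\land\forall s',t.(s_\varphi<s'\le s\land\mathit{start}(s')\le t\le\mathit{end}(s',s)\supset\varphi[t,s'])$; $\mathit{AchvSit}(s_\varphi,\varphi,s)\doteq\mathit{AchvSitAux}(s_\varphi,\varphi,s)\land\neg\exists s''.(s''<s_\varphi\land\mathit{AchvSitAux}(s'',\varphi,s))$. $\mathit{DirPossContr}(\alpha,s_\alpha,s_\varphi,\sigma,\varphi)\doteq\exists i,ts.\,\mathit{Exec}(s_\alpha)\land\mathit{Poss}(\alpha,s_\alpha)\land\mathit{timeStamp}(s_\alpha)=ts\land s_\alpha<s_\varphi\le\sigma\land\neg\varphi[\mathit{time}(\alpha),s_\alpha]\land\varphi[\mathit{end}(s_\varphi,\sigma),s_\varphi]\land\mathit{CausesDir}(\alpha,ts,\gamma^f_i,s_\varphi)$; $\mathit{DirActContr}(\alpha,s_\alpha,s_\varphi,\varphi,\sigma)\doteq\exists\sigma'.\,\mathit{DirPossContr}(\alpha,s_\alpha,s_\varphi,\sigma',\varphi)\land\sigma'\le\sigma$; $\mathit{PrimCause}(\alpha,ts,\varphi,\sigma)\doteq\exists s_\alpha,s_\varphi.\,\mathit{AchvSit}(s_\varphi,\varphi,\sigma)\land\mathit{timeStamp}(s_\alpha)=ts\land\mathit{DirActContr}(\alpha,s_\alpha,s_\varphi,\varphi,\sigma)$.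 Single-action counterfactual: $\mathit{CF}_{one}(s',s,\langle a',a,ts\rangle)$ holds iff there is $s_{sh}$ with $\mathit{timeStamp}(s_{sh})=ts$, $a\ne a'$, $do(a,s_{sh})\sqsubseteq s$, $do(a',s_{sh})\sqsubseteq s'$, and: for all $a^*,s^*$ with $do(a,s_{sh})\sqsubset do(a^*,s^* )\sqsubseteq s$ there is $s^+$ with $\mathit{timeStamp}(s^+)=\mathit{timeStamp}(s^* )$ and $do(a^*,s^+)\sqsubseteq s'$; and for all $a^*,s^*$ with $do(a',s_{sh})\sqsubset do(a^*,s^* )\sqsubseteq s'$ there is $s^+$ with $\mathit{timeStamp}(s^+)=\mathit{timeStamp}(s^* )$ and $do(a^*,s^+)\sqsubseteq s$. Preempted contributors: $\mathit{PreempContr}$ is the least relation $P(a,ts,\sigma',\varphi,\sigma)$ such that (i) if $\mathit{PrimCause}(a,ts,\varphi,\sigma)$ and $\mathit{CF}_{one}(\sigma',\sigma,\langle\mathit{noOp}(\mathit{time}(a)),a,ts\rangle)$ then $P(a,ts,\sigma',\varphi,\sigma)$; (ii) if $P(a'',ts'',\sigma'',\varphi,\sigma)$, $\mathit{PrimCause}(a',ts',\varphi,\sigma'')$ and $\mathit{CF}_{one}(\sigma',\sigma'',\langle\mathit{noOp}(\mathit{time}(a')),a',ts'\rangle)$ then $P(a',ts',\sigma',\varphi,\sigma)$. $|s|$ is the number of $\mathit{noOp}$ actions in $s$: $|S_0|=0$; $|do(a,s')|=|s'|$ if $a$ is not of the form $\mathit{noOp}(t)$; $|do(\mathit{noOp}(t),s')|=1+|s'|$.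 $\mathit{DefusedSit}(\varphi,\sigma,\sigma')\doteq\exists a',ts'.\,\mathit{PreempContr}(a',ts',\sigma',\varphi,\sigma)\land\forall\sigma'',a'',ts''.\,(\mathit{PreempContr}(a'',ts'',\sigma'',\varphi,\sigma)\land\sigma'\ne\sigma''\supset|\sigma''|<|\sigma'|)$. *)

(* Semantic rendering of the hybrid temporal situation calculus
   (HTSC): a statement "D |= Phi" for an arbitrary hybrid basic action theory D
   is rendered as "Phi holds in every structure satisfying the axiom schemata of
   a hybrid BAT (with noOp)", the structure being a record [HBAT]. *)
From Stdlib Require Import Reals ClassicalEpsilon Arith.
Open Scope R_scope.
Set Implicit Arguments.
Unset Strict Implicit.

(* Situations: by the foundational axioms every model has (up to isomorphism)
   the tree of finite action sequences rooted at S0. *)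
Inductive sit (A : Type) : Type :=
| S0 : sit A
| do : A -> sit A -> sit A.
Arguments S0 {A}.

Inductive sqsub {A : Type} : sit A -> sit A -> Prop :=
| sqsub_do : forall a s, sqsub s (do a s)
| sqsub_step : forall a s s', sqsub s s' -> sqsub s (do a s').

Definition sqsubeq {A : Type} (s s' : sit A) : Prop := sqsub s s' \/ s = s'.

Fixpoint timeStamp {A : Type} (s : sit A) : nat :=
  match s with S0 => 0%nat | do _ s' => S (timeStamp s') end.

Record HBAT := {
  Act : Type;
  time : Act -> R;
  noOp : R -> Act;
  time_noOp : forall t, time (noOp t) = t;
  startS0 : R;
  Poss : Act -> sit Act -> Prop;
  Poss_noOp : forall t s, Poss (noOp t) s;
  (* discrete fluents: DState is the interpretation of all discrete fluents
     (for all arguments) in a situation; successor-state axioms are uniform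
     in s, hence dstate (do a s) is a function of a and dstate s *)
  DState : Type;
  dstate : sit Act -> DState;
  ssa : Act -> DState -> DState;
  dstate_do : forall a s, dstate (do a s) = ssa a (dstate s);
  ssa_noOp : forall t d, ssa (noOp t) d = d;
  (* temporal fluents: TFl = primitive temporal fluents applied to arguments x *)
  TFl : Type;
  TVal : Type;
  tval : TFl -> R -> sit Act -> TVal;
  Ctx : TFl -> Type;
  ctx : forall f, Ctx f -> DState -> Prop;   (* gamma^f_i, uniform in s (discrete fluents) *)
  ctx_excl : forall f (i j : Ctx f) d, i <> j -> ctx i d -> ctx j d -> False;
  delta : forall f, Ctx f -> TVal -> R -> sit Act -> Prop;
  sea : forall f t s y,
      tval f t s = y <->
      ((exists i : Ctx f, ctx i (dstate s) /\ delta i y t s) \/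
       (y = tval f (match s with S0 => startS0 | do a _ => time a end) s /\
        ~ (exists i : Ctx f, ctx i (dstate s))));
  tval_noOp : forall f t t' s, t <= t' -> tval f t' (do (noOp t) s) = tval f t' s
}.

Section HTSC.
Variable D : HBAT.
Notation Act := (Act D).
Notation Sit := (sit Act).

Definition start (s : Sit) : R :=
  match s with S0 => startS0 D | do a _ => time a end.

Definition Exec (s : Sit) : Prop :=
  forall a s', sqsubeq (do a s') s -> Poss a s' /\ start s' <= time a.

Definition slt (s s' : Sit) : Prop := sqsub s s' /\ Exec s'.
Definition sle (s s' : Sit) : Prop := slt s s' \/ s = s'.

Fixpoint nextTime (k : nat) (s : Sit) : R :=
  match s with
  | S0 => 0
  | do a s0 => if Nat.eqb (timeStamp s0) k then time a else nextTime k s0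
  end.

(* end(s',s) = start(s') if s' = s;  = time(a) if do(a,s') <= s.
   (On its intended domain s' <= s this is exactly the paper's definition;
   prefixes of s are identified by their timestamps.) *)
Definition endt (s' s : Sit) : R :=
  if Nat.eqb (timeStamp s') (timeStamp s) then start s' else nextTime (timeStamp s') s.

Record effect := { eff_fl : TFl D; eff_pred : TVal D -> Prop }.

Definition holds (phi : effect) (t : R) (s : Sit) : Prop :=
  eff_pred phi (tval (eff_fl phi) t s).

(* psi[s] for a situation-suppressed (uniform) formula given by its meaning *)
Definition CausesDir (a : Act) (ts : nat) (psi : Sit -> Prop) (s : Sit) : Prop :=
  exists sa, timeStamp sa = ts /\ slt S0 (do a sa) /\ sle (do a sa) s /\
    ~ psi sa /\ (forall s', sle (do a sa) s' -> sle s' s -> psi s').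

Definition AchvSitAux (sphi : Sit) (phi : effect) (s : Sit) : Prop :=
  holds phi (endt sphi s) sphi /\
  (forall s' t, slt sphi s' -> sle s' s -> start s' <= t -> t <= endt s' s ->
     holds phi t s').

Definition AchvSit (sphi : Sit) (phi : effect) (s : Sit) : Prop :=
  AchvSitAux sphi phi s /\ ~ (exists s'', slt s'' sphi /\ AchvSitAux s'' phi s).

Definition DirPossContr (alpha : Act) (salpha sphi sigma : Sit) (phi : effect) : Prop :=
  exists (i : Ctx (eff_fl phi)) (ts : nat),
    Exec salpha /\ Poss alpha salpha /\ timeStamp salpha = ts /\
    slt salpha sphi /\ sle sphi sigma /\
    ~ holds phi (time alpha) salpha /\ holds phi (endt sphi sigma) sphi /\
    CausesDir alpha ts (fun s => ctx i (dstate s)) sphi.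

Definition DirActContr (alpha : Act) (salpha sphi : Sit) (phi : effect) (sigma : Sit) : Prop :=
  exists sigma', DirPossContr alpha salpha sphi sigma' phi /\ sle sigma' sigma.

Definition PrimCause (alpha : Act) (ts : nat) (phi : effect) (sigma : Sit) : Prop :=
  exists salpha sphi, AchvSit sphi phi sigma /\ timeStamp salpha = ts /\
    DirActContr alpha salpha sphi phi sigma.

Definition CF_one (s' s : Sit) (a' a : Act) (ts : nat) : Prop :=
  exists ssh, timeStamp ssh = ts /\ a <> a' /\
    sqsubeq (do a ssh) s /\ sqsubeq (do a' ssh) s' /\
    (forall astar sstar, sqsub (do a ssh) (do astar sstar) -> sqsubeq (do astar sstar) s ->
       exists splus, timeStamp splus = timeStamp sstar /\ sqsubeq (do astar splus) s') /\
    (forall astar sstar, sqsub (do a' ssh) (do astar sstar) -> sqsubeq (do astar sstar) s' ->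
       exists splus, timeStamp splus = timeStamp sstar /\ sqsubeq (do astar splus) s).

Inductive PreempContr (phi : effect) (sigma : Sit) : Act -> nat -> Sit -> Prop :=
| pc_base : forall a ts sigma',
    PrimCause a ts phi sigma ->
    CF_one sigma' sigma (@noOp D (time a)) a ts ->
    PreempContr phi sigma a ts sigma'
| pc_step : forall a'' ts'' sigma'' a' ts' sigma',
    PreempContr phi sigma a'' ts'' sigma'' ->
    PrimCause a' ts' phi sigma'' ->
    CF_one sigma' sigma'' (@noOp D (time a')) a' ts' ->
    PreempContr phi sigma a' ts' sigma'.

Definition isNoOp (a : Act) : Prop := exists t, a = @noOp D t.

(* |s| : number of noOp actions in s *)
Fixpoint noOpCount (s : Sit) : nat :=
  match s with
  | S0 => 0%nat
  | do a s' => ((if excluded_middle_informative (isNoOp a) then 1 else 0) + noOpCount s')%nat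
  end.

Definition DefusedSit (phi : effect) (sigma sigma' : Sit) : Prop :=
  exists a' ts', PreempContr phi sigma a' ts' sigma' /\
    forall sigma'' a'' ts'', PreempContr phi sigma a'' ts'' sigma'' -> sigma' <> sigma'' ->
      (noOpCount sigma'' < noOpCount sigma')%nat.

End HTSC.

(* A situation has at most one primary cause: its achievement situation is unique, the
   mutually exclusive contexts leave a single context active there, and that context is
   switched on exactly once before it persists.  The primary cause is never a noOp, since
   noOp changes no fluent.  So the counterfactual with a noOp replaces exactly that action,
   and each step of the preempted-contributor chain is forced, keeps the length of the
   situation and adds one noOp.  Hence |.| indexes the chain injectively and is bounded by
   the length of sigma: the last element of the chain is the unique defused situation, and
   it has no primary cause, or the chain would go on. *)

From Stdlib Require Import Arith Lia Classical ClassicalEpsilon Wf_nat.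

Section Prefixes.
Context {A : Type}.
Implicit Types (s p q : sit A) (a : A).

Lemma sqsub_timeStamp {s s'} : sqsub s s' -> timeStamp s < timeStamp s'.
Proof. induction 1; simpl; lia. Qed.

Lemma sqsubeq_timeStamp {s s'} : sqsubeq s s' -> timeStamp s <= timeStamp s'.
Proof. intros [H|<-]; [apply sqsub_timeStamp in H|]; lia. Qed.

Lemma sqsub_trans {s1 s2 s3} : sqsub s1 s2 -> sqsub s2 s3 -> sqsub s1 s3.
Proof. intros H12 H23; induction H23; constructor; auto. Qed.

Lemma sqsubeq_trans {s1 s2 s3} : sqsubeq s1 s2 -> sqsubeq s2 s3 -> sqsubeq s1 s3.
Proof.
  intros [H12|<-] [H23|<-]; unfold sqsubeq; auto.
  left; eapply sqsub_trans; eauto.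
Qed.

Lemma sqsubeq_do {p s} a : sqsubeq p s -> sqsubeq p (do a s).
Proof. intros H; eapply sqsubeq_trans; [exact H | left; constructor]. Qed.

Lemma sqsubeq_of_do {p s a} : sqsubeq (do a p) s -> sqsubeq p s.
Proof. apply sqsubeq_trans; left; constructor. Qed.

Lemma sqsubeq_do_inv {p s a} : sqsubeq p (do a s) -> p = do a s \/ sqsubeq p s.
Proof. intros [H|H]; auto. inversion H; subst; unfold sqsubeq; auto. Qed.

Lemma sqsubeq_S0_inv {p} : sqsubeq p S0 -> p = S0.
Proof. intros [H|H]; auto. inversion H. Qed.

Lemma prefixes_total {s p q} : sqsubeq p s -> sqsubeq q s -> sqsubeq p q \/ sqsubeq q p.
Proof.
  revert p q; induction s as [|a s IH]; intros p q Hp Hq.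
  - apply sqsubeq_S0_inv in Hp, Hq; subst; left; right; reflexivity.
  - apply sqsubeq_do_inv in Hp, Hq.
    destruct Hp as [->|Hp]; [right; destruct Hq as [->|Hq]; [right|apply sqsubeq_do]; auto|].
    destruct Hq as [->|Hq]; [left; apply sqsubeq_do|]; auto.
Qed.

Lemma prefixes_le {s p q} :
  sqsubeq p s -> sqsubeq q s -> timeStamp p <= timeStamp q -> sqsubeq p q.
Proof.
  intros Hp Hq Hle. destruct (prefixes_total Hp Hq) as [H|[H|<-]]; auto.
  - apply sqsub_timeStamp in H; lia.
  - right; reflexivity.
Qed.

Lemma prefixes_lt {s p q} :
  sqsubeq p s -> sqsubeq q s -> timeStamp p < timeStamp q -> sqsub p q.
Proof. intros Hp Hq Hlt. destruct (prefixes_le Hp Hq) as [H|<-]; auto; lia. Qed.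

Fixpoint act_at (k : nat) s : option A :=
  match s with
  | S0 => None
  | do a s0 => if Nat.eqb (timeStamp s0) k then Some a else act_at k s0
  end.

Lemma act_at_ge k s : timeStamp s <= k -> act_at k s = None.
Proof.
  induction s as [|a s IH]; simpl; intros Hk; auto.
  destruct (Nat.eqb_spec (timeStamp s) k); [lia|]. apply IH; lia.
Qed.

Lemma act_at_do_last a s : act_at (timeStamp s) (do a s) = Some a.
Proof. simpl; now rewrite Nat.eqb_refl. Qed.

Lemma act_at_do k a s : k <> timeStamp s -> act_at k (do a s) = act_at k s.
Proof. simpl; intros Hk. destruct (Nat.eqb_spec (timeStamp s) k); [lia|auto]. Qed.

Lemma act_at_Some_iff k a s :
  act_at k s = Some a <-> exists p, timeStamp p = k /\ sqsubeq (do a p) s.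
Proof.
  induction s as [|b s IH]; simpl.
  - split; [discriminate|]. intros (p & _ & Hp). apply sqsubeq_S0_inv in Hp; discriminate.
  - destruct (Nat.eqb_spec (timeStamp s) k) as [<-|Hk]; split.
    + intros [= ->]. exists s; split; [|right]; reflexivity.
    + intros (p & Hp & Hle). apply sqsubeq_do_inv in Hle as [[= -> ->]|Hle]; auto.
      apply sqsubeq_timeStamp in Hle; simpl in Hle; lia.
    + intros (p & Hp & Hle)%IH. exists p; split; auto. now apply sqsubeq_do.
    + intros (p & Hp & Hle). apply IH. exists p; split; auto.
      apply sqsubeq_do_inv in Hle as [[= -> ->]|Hle]; [lia|auto].
Qed.

Lemma act_at_Some_lt {k a s} : act_at k s = Some a -> k < timeStamp s.
Proof.
  intros (p & <- & Hp)%act_at_Some_iff. apply sqsubeq_timeStamp in Hp; simpl in Hp; lia.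
Qed.

Lemma act_at_prefix {k p s} : sqsubeq p s -> k < timeStamp p -> act_at k s = act_at k p.
Proof.
  intros [H|<-] Hk; auto.
  induction H as [a s|a s s' H IH]; rewrite act_at_do; auto.
  - lia.
  - apply sqsub_timeStamp in H; lia.
Qed.

Lemma act_at_inj s s' : (forall k, act_at k s = act_at k s') -> s = s'.
Proof.
  revert s'; induction s as [|a s IH]; intros [|b s'] Hs; auto.
  - specialize (Hs (timeStamp s')). now rewrite act_at_do_last in Hs.
  - specialize (Hs (timeStamp s)). now rewrite act_at_do_last in Hs.
  - assert (Hts : timeStamp s = timeStamp s').
    { destruct (lt_eq_lt_dec (timeStamp s) (timeStamp s')) as [[Hlt|]|Hlt]; auto; exfalso.
      - specialize (Hs (timeStamp s')).
        rewrite act_at_do_last, act_at_do, act_at_ge in Hs by lia. discriminate.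
      - specialize (Hs (timeStamp s)).
        rewrite act_at_do_last, act_at_do, act_at_ge in Hs by lia. discriminate. }
    assert (a = b) as <-.
    { specialize (Hs (timeStamp s)). rewrite act_at_do_last, Hts, act_at_do_last in Hs.
      congruence. }
    f_equal. apply IH. intros k.
    destruct (Nat.eq_dec k (timeStamp s)) as [->|Hk].
    + rewrite (act_at_ge _ s), (act_at_ge _ s'); auto; lia.
    + specialize (Hs k). rewrite !act_at_do in Hs by lia. exact Hs.
Qed.

Fixpoint replace (k : nat) (a' : A) s : sit A :=
  match s with
  | S0 => S0
  | do a s0 => if Nat.eqb (timeStamp s0) k then do a' s0 else do a (replace k a' s0)
  end.

Lemma replace_timeStamp k a' s : timeStamp (replace k a' s) = timeStamp s.
Proof. induction s as [|a s IH]; simpl; auto. destruct (Nat.eqb _ _); simpl; auto. Qed.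

Lemma act_at_replace_same k a' s : k < timeStamp s -> act_at k (replace k a' s) = Some a'.
Proof.
  induction s as [|a s IH]; intros Hk; cbn [replace timeStamp] in *; [lia|].
  destruct (Nat.eqb_spec (timeStamp s) k) as [<-|Hne]; cbv iota.
  - apply act_at_do_last.
  - rewrite act_at_do by (rewrite replace_timeStamp; auto). apply IH; lia.
Qed.

Lemma act_at_replace_other j k a' s : j <> k -> act_at j (replace k a' s) = act_at j s.
Proof.
  induction s as [|a s IH]; intros Hjk; auto. cbn [replace].
  destruct (Nat.eqb_spec (timeStamp s) k) as [<-|Hne]; cbv iota.
  - now rewrite act_at_do, act_at_do.
  - destruct (Nat.eq_dec j (timeStamp s)) as [->|Hj].
    + rewrite <- (replace_timeStamp k a' s) at 1. now rewrite !act_at_do_last.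
    + rewrite !act_at_do by (rewrite ?replace_timeStamp; auto). auto.
Qed.

Lemma replace_prefix {a p s} a' :
  sqsubeq (do a p) s -> sqsubeq (do a' p) (replace (timeStamp p) a' s).
Proof.
  induction s as [|b s IH]; intros Hp.
  - apply sqsubeq_S0_inv in Hp; discriminate.
  - simpl. apply sqsubeq_do_inv in Hp as [[= -> ->]|Hp].
    + rewrite Nat.eqb_refl. right; reflexivity.
    + pose proof (sqsubeq_timeStamp Hp) as Hts; simpl in Hts.
      destruct (Nat.eqb_spec (timeStamp s) (timeStamp p)); [lia|].
      apply sqsubeq_do; auto.
Qed.

Lemma later_actions_iff {a p s} s' :
  sqsubeq (do a p) s ->
  (forall astar sstar, sqsub (do a p) (do astar sstar) -> sqsubeq (do astar sstar) s ->
     exists splus, timeStamp splus = timeStamp sstar /\ sqsubeq (do astar splus) s') <->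
  (forall j c, timeStamp p < j -> act_at j s = Some c -> act_at j s' = Some c).
Proof.
  intros Hp; split.
  - intros Hlater j c Hj (q & <- & Hq)%act_at_Some_iff.
    apply act_at_Some_iff, Hlater; auto.
    eapply prefixes_lt; eauto; simpl; lia.
  - intros Hlater astar sstar Hlt Hq.
    apply sqsub_timeStamp in Hlt; simpl in Hlt.
    apply act_at_Some_iff, Hlater; [lia|]. apply act_at_Some_iff; eauto.
Qed.

End Prefixes.

Section Counterfactuals.
Context {D : HBAT}.
Implicit Types (s : sit (Act D)) (a : Act D).

Lemma CF_one_replace s' s a' a ts :
  CF_one s' s a' a ts <-> act_at ts s = Some a /\ a <> a' /\ s' = replace ts a' s.
Proof.
  split.
  - intros (ssh & <- & Hne & Hs & Hs' & Hlater & Hlater').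
    rewrite (later_actions_iff s' Hs) in Hlater.
    rewrite (later_actions_iff s Hs') in Hlater'.
    assert (Ha : act_at (timeStamp ssh) s = Some a) by (apply act_at_Some_iff; eauto).
    repeat split; auto.
    apply act_at_inj; intros k.
    destruct (lt_eq_lt_dec k (timeStamp ssh)) as [[Hk| ->]|Hk].
    + rewrite act_at_replace_other by lia.
      rewrite (act_at_prefix Hs'), (act_at_prefix Hs) by (simpl; lia).
      rewrite !act_at_do by lia. reflexivity.
    + rewrite act_at_replace_same by exact (act_at_Some_lt Ha).
      apply act_at_Some_iff; eauto.
    + rewrite act_at_replace_other by lia.
      destruct (act_at k s) as [c|] eqn:Hc; [now apply Hlater|].
      destruct (act_at k s') as [c|] eqn:Hc'; auto.
      rewrite (Hlater' k c) in Hc; congruence.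
  - intros (Ha & Hne & ->).
    destruct (proj1 (act_at_Some_iff _ _ _) Ha) as (ssh & <- & Hs).
    pose proof (replace_prefix a' Hs) as Hs'.
    exists ssh; repeat split; auto.
    + apply (later_actions_iff _ Hs). intros j c Hj Hc.
      rewrite act_at_replace_other by lia. exact Hc.
    + apply (later_actions_iff _ Hs'). intros j c Hj Hc.
      rewrite act_at_replace_other in Hc by lia. exact Hc.
Qed.

Lemma noOpCount_le_timeStamp s : noOpCount s <= timeStamp s.
Proof. induction s as [|a s IH]; simpl; auto. destruct excluded_middle_informative; lia. Qed.

Lemma noOpCount_replace_noOp {k s a} t :
  act_at k s = Some a -> ~ isNoOp a -> noOpCount (replace k (noOp D t) s) = S (noOpCount s).
Proof.
  induction s as [|b s IH]; simpl; intros Ha Hna; [discriminate|].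
  destruct (Nat.eqb_spec (timeStamp s) k); simpl.
  - injection Ha as ->.
    destruct (excluded_middle_informative (isNoOp (noOp D t))) as [_|Hn];
      [|exfalso; apply Hn; exists t; reflexivity].
    destruct (excluded_middle_informative (isNoOp a)); [contradiction|]. lia.
  - rewrite IH; auto.
Qed.

Lemma CF_one_noOp_count {s' s a ts} :
  CF_one s' s (noOp D (time a)) a ts ->
  noOpCount s' = S (noOpCount s) /\ timeStamp s' = timeStamp s.
Proof.
  intros (Ha & Hne & ->)%CF_one_replace. split; [|apply replace_timeStamp].
  apply (noOpCount_replace_noOp _ Ha).
  intros [t ->]. apply Hne. now rewrite time_noOp.
Qed.

End Counterfactuals.

Section PrimaryCause.
Context {D : HBAT}.
Implicit Types (s p : sit (Act D)) (a : Act D) (psi : sit (Act D) -> Prop).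

Lemma sle_sqsubeq {s s'} : sle s s' -> sqsubeq s s'.
Proof. intros [[H _]|<-]; [left|right]; auto. Qed.

Lemma Exec_prefix {p s} : sqsubeq p s -> Exec s -> Exec p.
Proof. intros Hp Hs a s' H. apply Hs. eapply sqsubeq_trans; eauto. Qed.

Lemma sle_of_sqsubeq {s s'} : sqsubeq s s' -> Exec s' -> sle s s'.
Proof. intros [H|<-] E; [left; split|right]; auto. Qed.

Lemma CausesDir_Exec {a ts psi s} : CausesDir a ts psi s -> Exec s.
Proof. intros (sa & _ & [_ Hex] & [[_ Hs]| <-] & _); auto. Qed.

Lemma CausesDir_holds {a ts psi s} : CausesDir a ts psi s -> psi s.
Proof. intros (sa & _ & _ & Hle & _ & Hon). apply Hon; [exact Hle | right; reflexivity]. Qed.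

Lemma CausesDir_act_at {a ts psi s} : CausesDir a ts psi s -> act_at ts s = Some a.
Proof. intros (sa & <- & _ & Hle & _). apply act_at_Some_iff; eauto using sle_sqsubeq. Qed.

(* The later of two switchings-on of [psi] would happen while [psi] already holds. *)
Lemma CausesDir_timeStamp_le {a1 ts1 a2 ts2 psi s} :
  CausesDir a1 ts1 psi s -> CausesDir a2 ts2 psi s -> ts2 <= ts1.
Proof.
  intros H1 H2. pose proof (CausesDir_Exec H1) as Hex.
  destruct H1 as (sa1 & <- & _ & Hle1 & _ & Hon).
  destruct H2 as (sa2 & <- & _ & Hle2 & Hoff & _).
  apply sle_sqsubeq in Hle1, Hle2. pose proof (sqsubeq_of_do Hle2) as Hsa2.
  destruct (le_lt_dec (timeStamp sa2) (timeStamp sa1)) as [|Hlt]; auto.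
  exfalso; apply Hoff, Hon.
  - apply sle_of_sqsubeq; [apply (prefixes_le Hle1 Hsa2); simpl; lia|].
    exact (Exec_prefix Hsa2 Hex).
  - exact (sle_of_sqsubeq Hsa2 Hex).
Qed.

Lemma CausesDir_unique {a1 ts1 a2 ts2 psi s} :
  CausesDir a1 ts1 psi s -> CausesDir a2 ts2 psi s -> a1 = a2 /\ ts1 = ts2.
Proof.
  intros H1 H2.
  assert (ts1 = ts2) as <- by (apply Nat.le_antisymm; eapply CausesDir_timeStamp_le; eauto).
  split; auto. apply CausesDir_act_at in H1, H2. congruence.
Qed.

Lemma CausesDir_not_noOp {a ts s} {P : DState D -> Prop} :
  CausesDir a ts (fun s => P (dstate s)) s -> ~ isNoOp a.
Proof.
  intros (sa & _ & _ & Hle & Hoff & Hon) [t ->]. apply Hoff.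
  rewrite <- (ssa_noOp t (dstate sa)), <- dstate_do.
  apply Hon; [right; reflexivity | exact Hle].
Qed.

Lemma AchvSit_unique {phi sigma s1 s2} :
  AchvSit s1 phi sigma -> AchvSit s2 phi sigma ->
  sqsubeq s1 sigma -> sqsubeq s2 sigma -> Exec s1 -> Exec s2 -> s1 = s2.
Proof.
  intros [A1 Hmin1] [A2 Hmin2] H1 H2 E1 E2.
  destruct (prefixes_total H1 H2) as [[H|<-]|[H| ->]]; auto; exfalso.
  - apply Hmin2; exists s1; split; [split|]; auto.
  - apply Hmin1; exists s2; split; [split|]; auto.
Qed.

Lemma PrimCause_CausesDir {a ts phi sigma} :
  PrimCause a ts phi sigma ->
  exists sphi (i : Ctx (eff_fl phi)), AchvSit sphi phi sigma /\ sqsubeq sphi sigma /\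
    CausesDir a ts (fun s => ctx i (dstate s)) sphi.
Proof.
  intros (sa & sphi & Hach & Hts & sigma' & (i & ts' & _ & _ & <- & _ & Hle & _ & _ & Hcd) & Hle').
  exists sphi, i. subst ts. split; [exact Hach | split; [|exact Hcd]].
  eapply sqsubeq_trans; apply sle_sqsubeq; eauto.
Qed.

Lemma PrimCause_unique {a1 ts1 a2 ts2 phi sigma} :
  PrimCause a1 ts1 phi sigma -> PrimCause a2 ts2 phi sigma -> a1 = a2 /\ ts1 = ts2.
Proof.
  intros (sphi & i1 & A1 & H1 & C1)%PrimCause_CausesDir (sphi' & i2 & A2 & H2 & C2)%PrimCause_CausesDir.
  assert (sphi' = sphi) as ->
    by (apply (AchvSit_unique A2 A1 H2 H1); eapply CausesDir_Exec; eauto).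
  destruct (classic (i1 = i2)) as [<-|Hi].
  - exact (CausesDir_unique C1 C2).
  - exfalso. exact (ctx_excl Hi (CausesDir_holds C1) (CausesDir_holds C2)).
Qed.

Lemma PrimCause_act_at {a ts phi sigma} :
  PrimCause a ts phi sigma -> act_at ts sigma = Some a.
Proof.
  intros (sphi & i & _ & Hle & Hcd)%PrimCause_CausesDir.
  apply CausesDir_act_at in Hcd. rewrite (act_at_prefix Hle); auto.
  exact (act_at_Some_lt Hcd).
Qed.

Lemma PrimCause_not_noOp {a ts phi sigma} : PrimCause a ts phi sigma -> ~ isNoOp a.
Proof. intros (sphi & i & _ & _ & Hcd)%PrimCause_CausesDir. exact (CausesDir_not_noOp Hcd). Qed.

Lemma PrimCause_CF_one_noOp {a ts phi sigma} :
  PrimCause a ts phi sigma ->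
  CF_one (replace ts (noOp D (time a)) sigma) sigma (noOp D (time a)) a ts.
Proof.
  intros Hpc. apply CF_one_replace. repeat split.
  - exact (PrimCause_act_at Hpc).
  - intros Heq. apply (PrimCause_not_noOp Hpc). eexists; exact Heq.
Qed.

End PrimaryCause.

Lemma nat_bounded_max (P : nat -> Prop) (B : nat) :
  (exists n, P n) -> (forall n, P n -> n <= B) -> exists m, P m /\ forall n, P n -> n <= m.
Proof.
  intros [n0 Hn0] HB.
  destruct (dec_inh_nat_subset_has_unique_least_element (fun k => k <= B /\ P (B - k)))
    as (k & [[Hk HPk] Hmin] & _).
  - intros k; apply classic.
  - exists (B - n0). specialize (HB n0 Hn0). split; [lia|].
    replace (B - (B - n0)) with n0 by lia. exact Hn0.
  - exists (B - k); split; auto. intros n Hn. specialize (HB n Hn).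
    assert (B - n <= B /\ P (B - (B - n))) as Hdual
      by (split; [lia|]; replace (B - (B - n)) with n by lia; exact Hn).
    specialize (Hmin _ Hdual). lia.
Qed.

Section Preemption.
Context {D : HBAT} {phi : effect D} {sigma : sit (Act D)}.

Lemma PreempContr_noOpCount {a ts s'} :
  PreempContr phi sigma a ts s' ->
  noOpCount sigma < noOpCount s' /\ timeStamp s' = timeStamp sigma.
Proof.
  induction 1 as [a ts s' _ Hcf | a'' ts'' s'' a ts s' _ IH _ Hcf];
    destruct (CF_one_noOp_count Hcf); lia.
Qed.

Lemma PreempContr_noOpCount_inj {a1 ts1 s1 a2 ts2 s2} :
  PreempContr phi sigma a1 ts1 s1 -> PreempContr phi sigma a2 ts2 s2 ->
  noOpCount s1 = noOpCount s2 -> s1 = s2.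
Proof.
  intros H1; revert a2 ts2 s2.
  induction H1 as [a1 ts1 s1 Hpc1 Hcf1 | b1 tb1 s1'' a1 ts1 s1 Hpre1 IH Hpc1 Hcf1];
    intros a2 ts2 s2 H2 Hcount;
    destruct H2 as [a2 ts2 s2 Hpc2 Hcf2 | b2 tb2 s2'' a2 ts2 s2 Hpre2 Hpc2 Hcf2];
    pose proof (CF_one_noOp_count Hcf1) as [Hc1 _];
    pose proof (CF_one_noOp_count Hcf2) as [Hc2 _].
  - destruct (PrimCause_unique Hpc1 Hpc2) as [<- <-].
    apply CF_one_replace in Hcf1 as (_ & _ & ->), Hcf2 as (_ & _ & ->). reflexivity.
  - destruct (PreempContr_noOpCount Hpre2). lia.
  - destruct (PreempContr_noOpCount Hpre1). lia.
  - assert (s2'' = s1'') as -> by (symmetry; apply (IH _ _ _ Hpre2); lia).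
    destruct (PrimCause_unique Hpc1 Hpc2) as [<- <-].
    apply CF_one_replace in Hcf1 as (_ & _ & ->), Hcf2 as (_ & _ & ->). reflexivity.
Qed.

Lemma DefusedSit_exists {a ts} : PrimCause a ts phi sigma -> exists s', DefusedSit phi sigma s'.
Proof.
  intros Hpc.
  destruct (nat_bounded_max
              (fun n => exists a ts s', PreempContr phi sigma a ts s' /\ noOpCount s' = n)
              (timeStamp sigma))
    as (m & (a' & ts' & s' & Hs' & <-) & Hmax).
  - exists (noOpCount (replace ts (noOp D (time a)) sigma)).
    eexists _, _, _; split; [apply pc_base; [exact Hpc | exact (PrimCause_CF_one_noOp Hpc)] |].
    reflexivity.
  - intros n (a1 & ts1 & s1 & H1 & <-). destruct (PreempContr_noOpCount H1) as [_ <-].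
    apply noOpCount_le_timeStamp.
  - exists s', a', ts'. split; auto. intros s'' a'' ts'' Hs'' Hne.
    assert (noOpCount s'' <= noOpCount s') as Hle by (apply Hmax; eauto).
    destruct (Nat.eq_dec (noOpCount s'') (noOpCount s')) as [Heq|]; [|lia].
    exfalso; apply Hne. exact (PreempContr_noOpCount_inj Hs' Hs'' (eq_sym Heq)).
Qed.

Lemma DefusedSit_unique {s1 s2} : DefusedSit phi sigma s1 -> DefusedSit phi sigma s2 -> s1 = s2.
Proof.
  intros (a1 & ts1 & H1 & Hmax1) (a2 & ts2 & H2 & Hmax2).
  destruct (classic (s1 = s2)) as [|Hne]; auto.
  specialize (Hmax1 _ _ _ H2 Hne). specialize (Hmax2 _ _ _ H1 (not_eq_sym Hne)). lia.
Qed.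

Lemma DefusedSit_no_PrimCause {s' b tsb} : DefusedSit phi sigma s' -> ~ PrimCause b tsb phi s'.
Proof.
  intros (a' & ts' & Hs' & Hmax) Hpc.
  pose proof (PrimCause_CF_one_noOp Hpc) as Hcf.
  pose proof (CF_one_noOp_count Hcf) as [Hcount _].
  assert (s' <> replace tsb (noOp D (time b)) s') as Hne
    by (intros Heq; rewrite <- Heq in Hcount; lia).
  specialize (Hmax _ _ _ (pc_step Hs' Hpc Hcf) Hne). lia.
Qed.

End Preemption.

Theorem lemma7p7 (D : HBAT) (phi : effect D) (sigma : sit (Act D)) :
  ((exists a ts, PrimCause a ts phi sigma) -> exists sigma', DefusedSit phi sigma sigma')
  /\
  (forall a1 ts1 sigma1 a2 ts2 sigma2,
      PreempContr phi sigma a1 ts1 sigma1 -> PreempContr phi sigma a2 ts2 sigma2 ->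
      noOpCount sigma1 = noOpCount sigma2 -> sigma1 = sigma2)
  /\
  (forall sigma' sigma'', DefusedSit phi sigma sigma' -> DefusedSit phi sigma sigma'' ->
      sigma' = sigma'')
  /\
  (forall sigma', DefusedSit phi sigma sigma' -> ~ exists b tsb, PrimCause b tsb phi sigma').
Proof.
  split; [|split; [|split]].
  - intros (a & ts & Hpc). exact (DefusedSit_exists Hpc).
  - intros a1 ts1 s1 a2 ts2 s2. apply PreempContr_noOpCount_inj.
  - intros s1 s2. apply DefusedSit_unique.
  - intros s' Hdef (b & tsb & Hpc). exact (DefusedSit_no_PrimCause Hdef Hpc).
Qed.
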